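(* There exists an atomic Puiseux monoid $M$ such that (1) $M \subseteq \mathbb{Z}\big[\tfrac{1}{2}, \tfrac{1}{3}\big]$, and (2) $\tfrac{1}{2^n} \in M$ for every $n \in \mathbb{N}_0$.
   Context: A Puiseux monoid is a submonoid of $(\mathbb{Q}_{\ge 0}, +)$. An atom of a monoid $M$ is a nonzero element $a$ (in a Puiseux monoid the only invertible element is $0$) such that $a = x+y$ with $x,y\in M$ implies $x = 0$ or $y = 0$; $M$ is atomic if every nonzero element is a finite sum of atoms. $\mathbb{N}_0 = \{0,1,2,\dots\}$. *)

From mathcomp Require Import all_boot all_order all_algebra.
Set Implicit Arguments. Unset Strict Implicit. Unset Printing Implicit Defensive.
Import Order.TTheory GRing.Theory Num.Theory.
Local Open Scope ring_scope.

Definition puiseux_monoid (M : rat -> Prop) : Prop :=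
  (forall x, M x -> 0 <= x) /\ M 0 /\ (forall x y, M x -> M y -> M (x + y)).

Definition atom (M : rat -> Prop) (a : rat) : Prop :=
  M a /\ a != 0 /\ (forall x y, M x -> M y -> a = x + y -> x = 0 \/ y = 0).

Definition atomic (M : rat -> Prop) : Prop :=
  forall x, M x -> x != 0 ->
    exists s : seq rat, (forall a, a \in s -> atom M a) /\ x = \sum_(a <- s) a.

Definition in_Z_half_third (q : rat) : Prop :=
  exists (z : int) (m n : nat), q = z%:~R / (2 ^+ m * 3 ^+ n).

(* The monoid is generated by a_n = 3/2^(n+3) + 2/9^(n+2) and
   b_n = 5/2^(n+4) - 1/9^(n+2), so that a_n + 2 b_n = 1/2^n.  Each generator g is
   a dyadic part plus a small triadic part t(g), and |t|/g strictly increases with g.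
   If g were a sum of strictly smaller generators, the ratio bound would give
   |sum of their t| < |t(g)|.  But t(g) - sum t is also a difference of dyadic
   parts, so it lies in Z[1/2] ∩ Z[1/3] = Z; having absolute value < 1 it is 0,
   a contradiction.  Hence every generator is an atom. *)

From mathcomp Require Import all_boot all_order all_algebra ring lra.
Import Order.TTheory GRing.Theory Num.Theory.
Set Implicit Arguments.
Unset Strict Implicit.
Unset Printing Implicit Defensive.

Local Open Scope ring_scope.

Lemma intrX (R : pzRingType) (r : int) k : (r ^+ k)%:~R = r%:~R ^+ k :> R.
Proof. exact: rmorphXn. Qed.

Definition in_Z_inv (p : int) (x : rat) : Prop :=
  exists (z : int) (j : nat), x = z%:~R / p%:~R ^+ j.

Section LocalizationOfZ.

Variable p : int.
Hypothesis p_neq0 : p != 0.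

Lemma in_Z_inv_int (z : int) : in_Z_inv p z%:~R.
Proof. by exists z, 0%N; rewrite expr0 divr1. Qed.

Lemma in_Z_inv_invX j : in_Z_inv p (p%:~R ^+ j)^-1.
Proof. by exists 1, j; rewrite div1r. Qed.

Lemma in_Z_invMz (z : int) x : in_Z_inv p x -> in_Z_inv p (z%:~R * x).
Proof. by move=> [w [j ->]]; exists (z * w), j; rewrite intrM mulrA. Qed.

Lemma in_Z_invN x : in_Z_inv p x -> in_Z_inv p (- x).
Proof. by move=> [z [j ->]]; exists (- z), j; rewrite intrN mulNr. Qed.

Lemma in_Z_invD x y : in_Z_inv p x -> in_Z_inv p y -> in_Z_inv p (x + y).
Proof.
move=> [z1 [j1 ->]] [z2 [j2 ->]].
exists (z1 * p ^+ j2 + z2 * p ^+ j1), (j1 + j2)%N.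
have pX_neq0 j : (p%:~R ^+ j : rat) != 0 by rewrite expf_neq0 ?intr_eq0.
rewrite intrD !intrM !intrX exprD; field.
by rewrite !pX_neq0.
Qed.

Lemma in_Z_inv_sum (I : Type) (s : seq I) (f : I -> rat) :
  (forall i, in_Z_inv p (f i)) -> in_Z_inv p (\sum_(i <- s) f i).
Proof.
move=> f_in; elim: s => [|i s IHs]; first by rewrite big_nil; apply: (in_Z_inv_int 0).
by rewrite big_cons; apply: in_Z_invD.
Qed.

End LocalizationOfZ.

Lemma in_Z_inv_coprime (p q : int) x : p != 0 -> q != 0 -> coprimez p q ->
  in_Z_inv p x -> in_Z_inv q x -> x \is a Num.int.
Proof.
move=> p_neq0 q_neq0 copq [z [j ->]] [w [i /eqP]].
rewrite -!intrX eqr_div ?intr_eq0 ?expf_neq0 // -!intrM eqr_int => /eqP zqE.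
have : (p ^+ j %| z * q ^+ i)%Z by rewrite zqE dvdz_mull.
rewrite Gauss_dvdzl; last exact/coprimezXl/coprimezXr.
exact: Qint_dvdz.
Qed.

Lemma in_Z_half_thirdD x y :
  in_Z_half_third x -> in_Z_half_third y -> in_Z_half_third (x + y).
Proof.
move=> [z1 [m1 [n1 ->]]] [z2 [m2 [n2 ->]]].
exists (z1 * 2 ^+ m2 * 3 ^+ n2 + z2 * 2 ^+ m1 * 3 ^+ n1), (m1 + m2)%N, (n1 + n2)%N.
have pX_neq0 (r : nat) k : (r > 0)%N -> (r%:R ^+ k : rat) != 0.
  by move=> r_gt0; rewrite expf_neq0 ?pnatr_eq0 -?lt0n.
rewrite intrD !intrM !intrX !exprD; field.
by rewrite !pX_neq0.
Qed.

Lemma in_Z_inv2_half_third x : in_Z_inv 2 x -> in_Z_half_third x.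
Proof. by move=> [z [j ->]]; exists z, j, 0%N; rewrite expr0 mulr1. Qed.

Lemma in_Z_inv3_half_third x : in_Z_inv 3 x -> in_Z_half_third x.
Proof. by move=> [z [j ->]]; exists z, 0%N, j; rewrite expr0 mul1r. Qed.

Lemma norm_sum_lt_ratio (R : numDomainType) (I : eqType) (s : seq I)
    (x y : I -> R) (X Y : R) :
  0 < X -> s != [::] -> (forall i, i \in s -> `|y i| * X < Y * x i) ->
  \sum_(i <- s) x i = X -> `|\sum_(i <- s) y i| < Y.
Proof.
move=> X_gt0 s_neq0 ratio_lt sumE; rewrite -(ltr_pM2r X_gt0).
apply: (le_lt_trans (ler_wpM2r (ltW X_gt0) (ler_norm_sum _ _ _))).
rewrite -{2}sumE mulr_suml mulr_sumr !big_seq.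
apply: ltr_sum => //; apply/hasP.
by case: s s_neq0 {ratio_lt sumE} => // a s _; exists a; rewrite mem_head.
Qed.

Section GeneratedMonoid.

Variables (I : eqType) (g : I -> rat).
Hypothesis g_gt0 : forall i, 0 < g i.

Definition generated (x : rat) : Prop := exists s : seq I, x = \sum_(i <- s) g i.

Lemma sum_gen_ge0 (s : seq I) : 0 <= \sum_(i <- s) g i.
Proof. by apply: sumr_ge0 => i _; apply: ltW. Qed.

Lemma gen_le_sum (s : seq I) i : i \in s -> g i <= \sum_(j <- s) g j.
Proof. by move=> i_in; rewrite (big_rem i) //= lerDl sum_gen_ge0. Qed.

Lemma puiseux_monoid_generated : puiseux_monoid generated.
Proof.
split; first by move=> x [s ->]; apply: sum_gen_ge0.
split; first by exists [::]; rewrite big_nil.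
by move=> x y [s1 ->] [s2 ->]; exists (s1 ++ s2); rewrite big_cat.
Qed.

Lemma atom_generated i0 :
    (forall s, (forall i, i \in s -> g i < g i0) -> \sum_(i <- s) g i != g i0) ->
  atom generated (g i0).
Proof.
move=> not_sum_smaller; split; first by exists [:: i0]; rewrite big_seq1.
split; first by rewrite gt_eqF.
move=> x y [s1 ->] [s2 ->] sumE.
have [-> | x_neq0] := eqVneq (\sum_(i <- s1) g i) 0; first by left.
have [-> | y_neq0] := eqVneq (\sum_(i <- s2) g i) 0; first by right.
have x_gt0 : 0 < \sum_(i <- s1) g i by rewrite lt_def x_neq0 sum_gen_ge0.
have y_gt0 : 0 < \sum_(i <- s2) g i by rewrite lt_def y_neq0 sum_gen_ge0.
suff : \sum_(i <- s1 ++ s2) g i != g i0 by rewrite big_cat sumE eqxx.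
apply: not_sum_smaller => i; rewrite mem_cat sumE => /orP[] /gen_le_sum; lra.
Qed.

Lemma atomic_generated : (forall i, atom generated (g i)) -> atomic generated.
Proof.
move=> g_atom x [s ->] _; exists (map g s); split; last by rewrite big_map.
by move=> a /mapP[i _ ->].
Qed.

Variables (p q : int) (d t : I -> rat).
Hypotheses (p_neq0 : p != 0) (q_neq0 : q != 0) (coprime_pq : coprimez p q).
Hypothesis g_split : forall i, g i = d i + t i.
Hypotheses (d_in : forall i, in_Z_inv p (d i)) (t_in : forall i, in_Z_inv q (t i)).

Lemma sum_gen_split (s : seq I) :
  \sum_(i <- s) g i = \sum_(i <- s) d i + \sum_(i <- s) t i.
Proof. by rewrite -big_split; apply: eq_bigr => i _; apply: g_split. Qed.

Lemma sum_smaller_neq i0 (s : seq I) :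
    `|t i0| < 1 / 2 ->
    (forall i, g i < g i0 -> `|t i| * g i0 < `|t i0| * g i) ->
    (forall i, i \in s -> g i < g i0) ->
  \sum_(i <- s) g i != g i0.
Proof.
move=> t0_small ratio_lt smaller; apply/eqP => sumE.
have s_neq0 : s != [::].
  by case: s sumE {smaller} => // /esym; rewrite big_nil => /eqP; rewrite gt_eqF.
have sum_t_lt : `|\sum_(i <- s) t i| < `|t i0|.
  apply: (norm_sum_lt_ratio (g_gt0 i0) s_neq0 _ sumE) => i /smaller.
  exact: ratio_lt.
set D := \sum_(i <- s) d i; set T := \sum_(i <- s) t i.
have diffE : t i0 - T = D - d i0 by move: sumE; rewrite sum_gen_split g_split -/D -/T; lra.
have diff_int : t i0 - T \is a Num.int.
  apply: (in_Z_inv_coprime p_neq0 q_neq0 coprime_pq).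
    by rewrite diffE; apply/in_Z_invD/in_Z_invN/d_in => //; apply: in_Z_inv_sum.
  by apply/in_Z_invD/in_Z_invN/in_Z_inv_sum/t_in => //; apply: t_in.
have diff_small : `|t i0 - T| < 1.
  by apply: le_lt_trans (ler_normB _ _) _; lra.
have diff0 : t i0 - T = 0.
  by apply/eqP; apply: contraTT diff_small => /(norm_intr_ge1 diff_int); rewrite leNgt.
by move: sum_t_lt; rewrite -/T -(subr0_eq diff0) ltxx.
Qed.

Lemma generated_split x : generated x ->
  exists y z, [/\ in_Z_inv p y, in_Z_inv q z & x = y + z].
Proof.
move=> [s ->]; exists (\sum_(i <- s) d i), (\sum_(i <- s) t i).
by split; [apply: in_Z_inv_sum | apply: in_Z_inv_sum | apply: sum_gen_split].
Qed.

End GeneratedMonoid.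

Section Generators.

Context {R : realFieldType}.

Definition half_pow (n : nat) : R := (2 ^+ n)^-1.
Definition eps (n : nat) : R := (9 ^+ n.+2)^-1.

Lemma half_pow_gt0 n : 0 < half_pow n.
Proof. by rewrite invr_gt0 exprn_gt0. Qed.

Lemma eps_gt0 n : 0 < eps n.
Proof. by rewrite invr_gt0 exprn_gt0. Qed.

Lemma half_powS n : 2 * half_pow n.+1 = half_pow n.
Proof. by rewrite /half_pow exprS invfM mulrA divff ?mul1r ?pnatr_eq0. Qed.

Lemma epsS n : 9 * eps n.+1 = eps n.
Proof. by rewrite /eps exprS invfM mulrA divff ?mul1r ?pnatr_eq0. Qed.

Lemma half_pow_leq m n : (m <= n)%N -> half_pow n <= half_pow m.
Proof. by move=> le_mn; rewrite lef_pV2 ?posrE ?exprn_gt0 ?ltr0n // ler_eXn2l ?ltr1n. Qed.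

Lemma half_pow_le1 n : half_pow n <= 1.
Proof. by rewrite invf_le1 ?exprn_gt0 ?exprn_ege1 ?ltr0n ?ler1n. Qed.

Lemma half_pow_ltn m n : (m < n)%N -> 2 * half_pow n <= half_pow m.
Proof. by move=> /half_pow_leq /(ler_wpM2l (ler0n _ 2)); rewrite half_powS. Qed.

Lemma eps_le_half_pow n : 81 * eps n <= half_pow n.
Proof.
rewrite /eps /half_pow !exprS mulrA invfM mulrA -natrM mulfV ?pnatr_eq0 // mul1r.
by rewrite lef_pV2 ?posrE ?exprn_gt0 ?ltr0n // lerXn2r ?nnegrE ?ler0n ?ler_nat.
Qed.

Lemma eps_half_pow_leq n m : (n <= m)%N ->
  eps m * half_pow n <= eps n * half_pow m.
Proof.
move=> /subnKC <-; move: (m - n)%N => k.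
have posX (x : R) j : 0 < x -> x ^+ j \is Num.pos by rewrite posrE => /exprn_gt0.
rewrite /eps /half_pow -!invfM lef_pV2; try by rewrite rpredM ?posX ?ltr0n.
rewrite -addSn -addSn !exprD mulrA -[X in _ <= X]mulrA [9 ^+ k * _]mulrC mulrA.
apply: ler_wpM2l.
  by rewrite mulr_ge0 ?exprn_ge0 ?ler0n.
by rewrite lerXn2r ?nnegrE ?ler0n ?ler_nat.
Qed.

Lemma eps_half_pow_ltn n m : (n < m)%N ->
  9 * eps m * half_pow n <= 2 * eps n * half_pow m.
Proof.
move=> lt_nm; have mE := ltn_predK lt_nm.
move: lt_nm; rewrite -mE ltnS => /eps_half_pow_leq.
by rewrite epsS mulrAC half_powS [_ * eps n]mulrC.
Qed.

Definition dyadic_part (c : nat * bool) : R :=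
  (if c.2 then 3 / 8 else 5 / 16) * half_pow c.1.
Definition triadic_part (c : nat * bool) : R :=
  if c.2 then 2 * eps c.1 else - eps c.1.
Definition generator (c : nat * bool) : R := dyadic_part c + triadic_part c.

Lemma dyadic_partE c : dyadic_part c =
  if c.2 then 3 * half_pow c.1.+3 else 5 * half_pow c.1.+4.
Proof.
have := half_powS c.1; have := half_powS c.1.+1; have := half_powS c.1.+2.
by have := half_powS c.1.+3; rewrite /dyadic_part; case: c.2; lra.
Qed.

Lemma epsE n : eps n = (3 ^+ (2 * n.+2))^-1.
Proof. by rewrite /eps exprM expr2 -natrM. Qed.

Lemma generators_sum_half_pow n :
  \sum_(c <- [:: (n, true); (n, false); (n, false)]) generator c = half_pow n.
Proof. by rewrite !big_cons big_nil /generator /dyadic_part /triadic_part /=; lra. Qed.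

Lemma generator_bounds c :
  3 / 10 * half_pow c.1 <= generator c <= 2 / 5 * half_pow c.1.
Proof.
have := eps_le_half_pow c.1; have := eps_gt0 c.1.
by rewrite /generator /dyadic_part /triadic_part; case: c.2 => *; apply/andP; split; lra.
Qed.

Lemma generator_gt0 c : 0 < generator c.
Proof.
have := half_pow_gt0 c.1; have := generator_bounds c; case/andP; lra.
Qed.

Lemma norm_triadic_part_bounds c :
  eps c.1 <= `|triadic_part c| <= 2 * eps c.1.
Proof.
have e_gt0 := eps_gt0 c.1; rewrite /triadic_part.
case: c.2; first by rewrite ger0_norm; [apply/andP; split|]; lra.
by rewrite normrN gtr0_norm // lexx; lra.
Qed.

Lemma norm_triadic_part_lt c : `|triadic_part c| < 1 / 2.
Proof.
have := eps_le_half_pow c.1; have := half_pow_le1 c.1.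
have := norm_triadic_part_bounds c; case/andP; lra.
Qed.

Lemma triadic_ratio_lt c c0 : generator c < generator c0 ->
  `|triadic_part c| * generator c0 < `|triadic_part c0| * generator c.
Proof.
case: c c0 => [m b] [n b0] lt_gg0.
have [em_gt0 en_gt0] := (eps_gt0 m, eps_gt0 n).
have [um_gt0 un_gt0] := (half_pow_gt0 m, half_pow_gt0 n).
move: (generator_bounds (m, b)) (generator_bounds (n, b0)) => /=.
move=> /andP[g_ge g_le] /andP[g0_ge g0_le].
case: (ltngtP m n) => [lt_mn | lt_nm | eq_mn].
- by have := half_pow_ltn lt_mn; lra.
- move: (norm_triadic_part_bounds (m, b)) (norm_triadic_part_bounds (n, b0)) => /=.
  move=> /andP[_ t_le] /andP[t0_ge _].
  have le_tg0 := ler_pM (normr_ge0 _) (ltW (generator_gt0 (n, b0))) t_le g0_le.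
  have ge_t0g : eps n * (3 / 10 * half_pow m) <=
                `|triadic_part (n, b0)| * generator (m, b).
    by apply: ler_pM => //; [apply: ltW | lra].
  have := eps_half_pow_ltn lt_nm; have := mulr_gt0 en_gt0 um_gt0; lra.
- move: eq_mn lt_gg0 {g_ge g_le g0_ge g0_le} => <- lt_gg0.
  have norm_2eps : `|2 * eps m| = 2 * eps m by apply/ger0_norm/mulr_ge0/ltW.
  have norm_Neps : `|- eps m| = eps m by rewrite normrN; apply: gtr0_norm.
  have := eps_le_half_pow m.
  move: lt_gg0; rewrite /generator /dyadic_part /triadic_part.
  by case: b; case: b0 => /=; rewrite ?norm_Neps ?norm_2eps; nra.
Qed.

End Generators.

Lemma dyadic_part_in_Z_inv c : in_Z_inv 2 (dyadic_part c).
Proof.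
by rewrite dyadic_partE; case: c.2; [apply: (in_Z_invMz 3) | apply: (in_Z_invMz 5)];
  apply: in_Z_inv_invX.
Qed.

Lemma triadic_part_in_Z_inv c : in_Z_inv 3 (triadic_part c).
Proof.
have eps_in : in_Z_inv 3 (eps c.1) by rewrite epsE; apply: in_Z_inv_invX.
by rewrite /triadic_part; case: c.2; [apply: (in_Z_invMz 2) | apply: in_Z_invN].
Qed.

Theorem proposition5p1 :
  exists M : rat -> Prop,
    [/\ puiseux_monoid M, atomic M,
        (forall x, M x -> in_Z_half_third x) &
        (forall n : nat, M (1 / 2 ^+ n))].
Proof.
have gen_gt0 := @generator_gt0 rat.
have gen_split c : generator c = dyadic_part c + triadic_part c :> rat by [].
have [two_neq0 three_neq0 coprime23] :
  [/\ 2 != 0 :> int, 3 != 0 :> int & coprimez 2 3] by [].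
have not_sum_smaller := sum_smaller_neq gen_gt0 two_neq0 three_neq0 coprime23 gen_split
  dyadic_part_in_Z_inv triadic_part_in_Z_inv.
exists (generated generator); split.
- exact: puiseux_monoid_generated gen_gt0.
- apply: atomic_generated => c0; apply: (atom_generated gen_gt0) => s.
  by apply: not_sum_smaller (norm_triadic_part_lt c0) _ => c; apply: triadic_ratio_lt.
- move=> x /(generated_split two_neq0 three_neq0 gen_split dyadic_part_in_Z_inv
    triadic_part_in_Z_inv) [y [z [y_in z_in ->]]].
  by apply: in_Z_half_thirdD; [apply: in_Z_inv2_half_third | apply: in_Z_inv3_half_third].
- move=> n; exists [:: (n, true); (n, false); (n, false)].
  by rewrite (@generators_sum_half_pow rat) div1r.
Qed.
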